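(* In the setting where $A,B$ are strongly regular graphs with the same parameters, $A',B'$ are obtained by individualizing one port vertex each, $G=G(A',B')$ and $H=G(A',A')$: let $x\in V(G)$ lie in the part $C\in\{A,B\}$ of $G$ and $y\in V(H)$ lie in a part $D$ of $H$ (one of the two copies of $A$). Let $C'_x$ denote $C$ with its port vertex individualized and $x$ additionally individualized (with a different color), and similarly $D'_y$. If $\mathrm{WL}_1(C'_x)\ne\mathrm{WL}_1(D'_y)$, then $\mathrm{WL}_1(G_x)\ne\mathrm{WL}_1(H_y)$.
   Context: Graphs are finite, simple and undirected. A strongly regular graph with parameters $(n,d,\lambda,\mu)$ is an $n$-vertex $d$-regular graph in which any two adjacent vertices have $\lambda$ common neighbours and any two distinct non-adjacent vertices have $\mu$ common neighbours. $A'$ ($B'$) is $A$ ($B$) with a single port vertex $a_1$ ($b_1$) colored $1$ and others uncolored. $G(A',B')$ (uncolored) is the vertex-disjoint union of $A$ and $B$ plus a connecting vertex $c_1$ adjacent to $a_1$ and $b_1$ and a pendant vertex adjacent only to $c_1$; $H=G(A',A')$ uses two disjoint copies of $A'$. Color refinement on a vertex-colored $N$-vertex graph $X$: $C^0(x)$ is the color of $x$ (common default for uncolored vertices), $C^{r+1}(x)=\big(C^r(x),\{\!\{C^r(y)\}\!\}_{y\in N(x)}\big)$ ($\{\!\{\cdot\}\!\}$ = multiset), $\mathrm{WL}_1(X)=\{\!\{C^N(x)\}\!\}_{x}$. $G_x$ is $G$ with vertex $x$ given a special new color (the same special color for all choices of $x$). *)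

From mathcomp Require Import all_boot.
Set Implicit Arguments. Unset Strict Implicit. Unset Printing Implicit Defensive.

Definition simple_graph (V : finType) (e : rel V) : Prop :=
  symmetric e /\ irreflexive e.

Definition common_nbrs (V : finType) (e : rel V) (x y : V) : {set V} :=
  [set z | e x z && e y z].

Definition strongly_regular (V : finType) (e : rel V) (n d lam mu : nat) : Prop :=
  [/\ #|V| = n,
      forall x : V, #|[set y | e x y]| = d,
      forall x y : V, e x y -> #|common_nbrs e x y| = lam
    & forall x y : V, x != y -> ~~ e x y -> #|common_nbrs e x y| = mu].

(* A multiset of colours is
   represented canonically by the list of its elements sorted by their
   (injective) encoding [pickle]; two lists are equal after sorting iff
   they are equal as multisets. *)
Definition color := GenTree.tree nat.

Definition color_le (a b : color) : bool := pickle a <= pickle b.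

Definition mset_of (s : seq color) : seq color := sort color_le s.

(* C^{r+1}(x) = (C^r(x), {{ C^r(y) | y in N(x) }}) *)
Definition refine_step (V : finType) (e : rel V) (c : V -> color) : V -> color :=
  fun x => GenTree.Node 0 [:: c x; GenTree.Node 0 (mset_of (map c (filter (e x) (enum V))))].

Definition refine_iter (V : finType) (e : rel V) (col : V -> nat) (r : nat) : V -> color :=
  iter r (refine_step e) (fun x => GenTree.Leaf (col x)).

Definition WL1 (V : finType) (e : rel V) (col : V -> nat) : seq color :=
  mset_of (map (refine_iter e col #|V|) (enum V)).

Definition col_default : nat := 0.
Definition col_port : nat := 1.
Definition col_special : nat := 2.

Definition port_indiv (V : finType) (p x : V) : V -> nat :=
  fun v => if v == x then col_special else if v == p then col_port else col_default.

Definition indiv (V : finType) (x : V) : V -> nat :=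
  fun v => if v == x then col_special else col_default.

(* ---------- The construction G(A',B') ----------
   Vertex set (TA + TB) + bool: inl (inl a) = vertex of A, inl (inr b) =
   vertex of B, inr true = connecting vertex c1, inr false = pendant vertex. *)
Definition glue_adj (TA TB : finType) (eA : rel TA) (eB : rel TB) (a1 : TA) (b1 : TB)
  (u v : (TA + TB) + bool) : bool :=
  match u, v with
  | inl (inl a), inl (inl a') => eA a a'
  | inl (inr b), inl (inr b') => eB b b'
  | inl (inl a), inr true => a == a1
  | inr true, inl (inl a) => a == a1
  | inl (inr b), inr true => b == b1
  | inr true, inl (inr b) => b == b1
  | inr true, inr false => true
  | inr false, inr true => true
  | _, _ => false
  end.

Definition part_WL1 (TA TB : finType) (eA : rel TA) (eB : rel TB) (a1 : TA) (b1 : TB)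
  (c : TA + TB) : seq color :=
  match c with
  | inl a => WL1 eA (port_indiv a1 a)
  | inr b => WL1 eB (port_indiv b1 b)
  end.

From mathcomp Require Import all_boot zify.
Set Implicit Arguments. Unset Strict Implicit. Unset Printing Implicit Defensive.

(* In G_x the connecting vertex c1 is recognisable from its colour after two
   rounds: it is the only vertex of degree 3 with a neighbour of degree 1.
   Hence the colour of a vertex of a part determines, round by round, the
   colour that vertex gets by colour refinement inside its own part with the
   port (the neighbour of c1) coloured, and the pendant vertex always gets the
   same colour.  So WL_1(G_x) determines the multiset union of WL_1(C'_x), of
   WL_1 of the other part with only its port coloured, and of one pendant
   colour.  The other part is a strongly regular graph with one coloured vertex;
   its refinement colours only depend on the parameters and on whether a vertex
   is the port, a neighbour of it, or neither, so its contribution is the same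
   in G and in H and cancels. *)

Lemma color_le_total : total color_le.
Proof. by move=> a b; rewrite /color_le leq_total. Qed.

Lemma color_le_trans : transitive color_le.
Proof. by move=> a b c; rewrite /color_le; apply: leq_trans. Qed.

Lemma color_le_anti : antisymmetric color_le.
Proof. by move=> a b; rewrite /color_le -eqn_leq => /eqP /(pcan_inj pickleK). Qed.

Lemma perm_mset_ofP (s t : seq color) : reflect (mset_of s = mset_of t) (perm_eq s t).
Proof. exact: perm_sortP color_le_total color_le_trans color_le_anti s t. Qed.

Lemma perm_mset_of (s : seq color) : perm_eq (mset_of s) s.
Proof. by rewrite /mset_of perm_sort. Qed.

Lemma perm_mset_of_eq (s t : seq color) :
  perm_eq (mset_of s) (mset_of t) -> mset_of s = mset_of t.
Proof.
by rewrite (permPl (perm_mset_of s)) (permPr (perm_mset_of t)) => /perm_mset_ofP.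
Qed.

Lemma enum_sum (T1 T2 : finType) :
  enum {: T1 + T2} = map inl (enum T1) ++ map inr (enum T2).
Proof. by rewrite !enumT [in LHS]unlock. Qed.

Lemma enum_bool : enum {: bool} = [:: true; false].
Proof. by rewrite enumT unlock. Qed.

Lemma card_set_count (T : finType) (P : pred T) : #|[set x | P x]| = count P (enum T).
Proof. by rewrite cardsE -size_filter enumT cardE /enum_mem. Qed.

Lemma count_enum_pred1I (T : finType) (x : T) (a : pred T) :
  count (fun w => (w == x) && a w) (enum T) = a x.
Proof.
rewrite (eq_count (a2 := predI a (pred1 x))); last by move=> w; rewrite /= andbC.
by rewrite -count_filter filter_pred1_uniq ?enum_uniq ?mem_enum //= addn0.
Qed.

Lemma size_count_mem_le2 (s : seq nat) :
  all (leq^~ 2) s -> size s = count_mem 0 s + count_mem 1 s + count_mem 2 s.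
Proof.
elim: s => //= k s IH /andP[hk /IH ->].
by case: k hk => [|[|[|k]]] //= _; lia.
Qed.

Lemma perm_eq_le2 (s t : seq nat) :
  all (leq^~ 2) s -> all (leq^~ 2) t ->
  count_mem 0 s = count_mem 0 t -> count_mem 1 s = count_mem 1 t -> size s = size t ->
  perm_eq s t.
Proof.
move=> hs ht h0 h1 hsz; apply/allP => k _ /=; apply/eqP.
have [hsum_s hsum_t] := (size_count_mem_le2 hs, size_count_mem_le2 ht).
case: k => [|[|[|k]]] //.
  by move: hsum_s; rewrite hsz hsum_t h0 h1 => /addnI.
have zero u : all (leq^~ 2) u -> count_mem k.+3 u = 0.
  move=> /allP hu; rewrite (@eq_in_count _ _ pred0) ?count_pred0 // => x /hu.
  by case: x => [|[|[|x]]].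
by rewrite !zero.
Qed.

Definition deg (V : finType) (e : rel V) (v : V) : nat := count (e v) (enum V).

Definition port_coloring (V : finType) (p : V) : V -> nat :=
  fun v => if v == p then col_port else col_default.

Lemma refine_iterS (V : finType) (e : rel V) (col : V -> nat) (s : nat) (v : V) :
  refine_iter e col s.+1 v =
  GenTree.Node 0 [:: refine_iter e col s v;
    GenTree.Node 0 (mset_of (map (refine_iter e col s) (filter (e v) (enum V))))].
Proof. by []. Qed.

Lemma eq_refine_iter (V : finType) (e : rel V) (col1 col2 : V -> nat) :
  col1 =1 col2 -> forall s, refine_iter e col1 s =1 refine_iter e col2 s.
Proof.
move=> h; elim=> [|s IH] v; first by rewrite /refine_iter /= h.
by rewrite !refine_iterS IH (eq_map IH).
Qed.

Definition color_prev (t : color) : color :=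
  match t with GenTree.Node _ (a :: _) => a | _ => t end.

Definition color_nbrs (t : color) : seq color :=
  match t with GenTree.Node _ [:: _; GenTree.Node _ l] => l | _ => [::] end.

Fixpoint color_label (t : color) : nat :=
  match t with
  | GenTree.Leaf k => k
  | GenTree.Node _ (a :: _) => color_label a
  | _ => col_default
  end.

Definition connector_color (t : color) : bool :=
  (size (color_nbrs t) == 3) && has (fun u => size (color_nbrs u) == 1) (color_nbrs t).

(* [part_color r t] recovers from the colour [t] of a vertex of a part, in the
   glued graph, the round-[r] colour of that vertex in its part with the port
   coloured: the port is the vertex with a connector-coloured neighbour, and the
   connector is dropped from every neighbourhood. *)
Fixpoint part_color (r : nat) (t : color) : color :=
  match r with
  | 0 => GenTree.Leaf (if color_label t == col_special then col_special
                       else if has connector_color (color_nbrs t) then col_port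
                       else col_default)
  | r'.+1 => GenTree.Node 0 [:: part_color r' (color_prev t);
       GenTree.Node 0 (mset_of (map (part_color r')
                                 (filter (predC connector_color) (color_nbrs t))))]
  end.

Lemma color_label_refine_iter (V : finType) (e : rel V) (col : V -> nat) s v :
  color_label (refine_iter e col s v) = col v.
Proof. by elim: s v => [|s IH] v //; rewrite refine_iterS /= IH. Qed.

Lemma size_color_nbrs_refine_iter (V : finType) (e : rel V) (col : V -> nat) s v :
  size (color_nbrs (refine_iter e col s.+1 v)) = deg e v.
Proof. by rewrite refine_iterS /= /mset_of size_sort size_map size_filter. Qed.

Lemma connector_color_refine_iter (V : finType) (e : rel V) (col : V -> nat) s v :
  connector_color (refine_iter e col s.+2 v) =
  (deg e v == 3) && has (fun w => deg e w == 1) (filter (e v) (enum V)).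
Proof.
rewrite /connector_color size_color_nbrs_refine_iter; congr (_ && _).
rewrite refine_iterS /= (perm_has _ (perm_mset_of _)) has_map.
by apply: eq_has => w /=; rewrite size_color_nbrs_refine_iter.
Qed.

Section PartColor.

Variables (V P : finType) (e : rel V) (eP : rel P) (col : V -> nat).
Variables (f : P -> V) (p1 : P) (c : V).

Definition part_coloring (u : P) : nat :=
  if col (f u) == col_special then col_special
  else if u == p1 then col_port else col_default.

Hypothesis f_inj : injective f.
Hypothesis e_f : forall u u', e (f u) (f u') = eP u u'.
Hypothesis e_f_c : forall u, e (f u) c = (u == p1).
Hypothesis f_neq_c : forall u, f u != c.
Hypothesis nbr_f : forall u w, e (f u) w -> w != c -> exists u', w = f u'.
Hypothesis connector_colorE : forall s w, connector_color (refine_iter e col s.+2 w) = (w == c).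

Lemma perm_part_nbrs u :
  perm_eq (filter (predC1 c) (filter (e (f u)) (enum V))) (map f (filter (eP u) (enum P))).
Proof.
apply: uniq_perm.
- by do 2 apply: filter_uniq; apply: enum_uniq.
- by rewrite map_inj_uniq //; apply: filter_uniq; apply: enum_uniq.
move=> w; rewrite mem_filter (mem_filter (e (f u))) mem_enum andbT; apply/idP/idP.
- case/andP=> wc euw; have [u' wE] := nbr_f euw wc; subst w.
  by rewrite mem_map // mem_filter -e_f euw mem_enum.
- case/mapP=> u'; rewrite mem_filter mem_enum andbT => eu ->.
  by rewrite /= f_neq_c e_f.
Qed.

(* The connector is recognised from round 2 on, and round 0 of [part_color]
   already looks at the colours of the neighbours, hence the offset 3. *)
Lemma part_color_refine_iter r s u :
  r + 3 <= s -> part_color r (refine_iter e col s (f u)) = refine_iter eP part_coloring r u.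
Proof.
elim: r s u => [|r IH] [|s] u // hs.
  rewrite /= color_label_refine_iter (perm_has _ (perm_mset_of _)) has_map.
  case: s hs => [|[|s]] // _.
  rewrite (@eq_has _ _ (pred1 c)); last by move=> w /=; rewrite connector_colorE.
  by rewrite has_pred1 mem_filter mem_enum andbT e_f_c.
have {hs} hs' : r + 3 <= s by rewrite addSn ltnS in hs.
rewrite refine_iterS /= IH //.
congr (GenTree.Node 0 [:: _; GenTree.Node 0 _]); apply/perm_mset_ofP.
apply: (perm_trans (perm_map _ (perm_filter _ (perm_mset_of _)))).
rewrite filter_map -map_comp.
have -> : filter (preim (refine_iter e col s) (predC connector_color)) (filter (e (f u)) (enum V))
        = filter (predC1 c) (filter (e (f u)) (enum V)).
  apply: eq_filter => w /=.
  by case: s hs' => [|[|s]] //; rewrite ?addnS // => _; rewrite connector_colorE.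
have IHs : refine_iter eP part_coloring r =1 (part_color r \o refine_iter e col s) \o f.
  by move=> u' /=; rewrite IH.
by rewrite (eq_map IHs) (map_comp _ f) perm_map // perm_part_nbrs.
Qed.

End PartColor.

Lemma part_coloring_indiv_in (V P : finType) (f : P -> V) (p1 x : P) :
  injective f -> part_coloring (indiv (f x)) f p1 =1 port_indiv p1 x.
Proof.
by move=> f_inj u; rewrite /part_coloring /indiv /port_indiv (inj_eq f_inj); case: (u == x).
Qed.

Lemma part_coloring_indiv_out (V P : finType) (f : P -> V) (p1 : P) (v : V) :
  (forall u, f u != v) -> part_coloring (indiv v) f p1 =1 port_coloring p1.
Proof. by move=> hv u; rewrite /part_coloring /indiv /port_coloring (negbTE (hv u)). Qed.

Definition pendant_color (r : nat) : color :=
  refine_iter (fun _ _ : unit => false) (fun _ => col_port) r tt.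

Section Glue.

Variables (TA TB : finType) (eA : rel TA) (eB : rel TB) (a1 : TA) (b1 : TB) (d : nat).
Hypotheses (degA : forall a, deg eA a = d) (degB : forall b, deg eB b = d).

Local Notation W := ((TA + TB) + bool)%type.
Local Notation G := (glue_adj eA eB a1 b1).

Definition glueA (a : TA) : W := inl (inl a).
Definition glueB (b : TB) : W := inl (inr b).

Lemma glueA_inj : injective glueA. Proof. by move=> ? ? []. Qed.
Lemma glueB_inj : injective glueB. Proof. by move=> ? ? []. Qed.

Lemma enum_glue :
  enum {: W} = map glueA (enum TA) ++ map glueB (enum TB) ++ [:: inr true; inr false].
Proof. by rewrite !enum_sum enum_bool map_cat -!map_comp catA. Qed.

Lemma count_glue (p : pred W) :
  count p (enum {: W}) = count (p \o glueA) (enum TA) + count (p \o glueB) (enum TB)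
                     + p (inr true) + p (inr false).
Proof. by rewrite enum_glue !count_cat !count_map /= addn0 !addnA. Qed.

Lemma deg_glue w :
  deg G w = match w with
            | inl (inl a) => d + (a == a1)
            | inl (inr b) => d + (b == b1)
            | inr true => 3
            | inr false => 1
            end.
Proof.
have count0 (T : finType) (q : pred T) : q =1 pred0 -> count q (enum T) = 0.
  by move=> hq; rewrite (eq_count hq) count_pred0.
rewrite /deg count_glue; case: w => [[a|b]|[]].
- rewrite (count0 _ (_ \o glueB)) // -(degA a) /deg (@eq_count _ _ (eA a)) //=.
  by rewrite !addn0.
- rewrite (count0 _ (_ \o glueA)) // -(degB b) /deg (@eq_count _ _ (eB b)) //=.
  by rewrite add0n addn0.
- rewrite (eq_count (a2 := pred1 a1)) // (eq_count (a2 := pred1 b1)) //.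
  by rewrite !count_uniq_mem ?enum_uniq ?mem_enum.
- by rewrite !count0.
Qed.

Lemma connector_color_glue (col : W -> nat) s w :
  connector_color (refine_iter G col s.+2 w) = (w == inr true).
Proof.
rewrite connector_color_refine_iter deg_glue.
case: w => [[a|b]|[]].
- case: eqP => deg3 //=; apply/negbTE/hasPn => w; rewrite mem_filter => /andP[aw _].
  rewrite deg_glue; case: w aw => [[a'|b']|[]] //= _.
  by move: deg3; case: (a == a1); case: (a' == a1) => /= h; apply/eqP; lia.
- case: eqP => deg3 //=; apply/negbTE/hasPn => w; rewrite mem_filter => /andP[bw _].
  rewrite deg_glue; case: w bw => [[a'|b']|[]] //= _.
  by move: deg3; case: (b == b1); case: (b' == b1) => /= h; apply/eqP; lia.
- by apply/hasP; exists (inr false); rewrite ?deg_glue // mem_filter mem_enum.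
- by [].
Qed.

Lemma part_color_glue (col : W -> nat) r R :
  col (inr false) = col_default -> r + 3 <= R ->
  map (part_color r) (filter (predC connector_color) (map (refine_iter G col R) (enum {: W})))
  = map (refine_iter eA (part_coloring col glueA a1) r) (enum TA)
    ++ map (refine_iter eB (part_coloring col glueB b1) r) (enum TB) ++ [:: pendant_color r].
Proof.
move=> pendant_default hR.
have [R' eR] : exists R', R = R'.+2 by case: R hR => [|[|R']]; rewrite ?addnS //; exists R'.
have keep (U : finType) (g : U -> W) :
    (forall x, g x != inr true) -> filter (predC1 (inr true)) (map g (enum U)) = map g (enum U).
  by move=> hg; apply/all_filterP/allP => _ /mapP[x _ ->]; apply: hg.
rewrite filter_map (eq_filter (a2 := predC1 (inr true))); last first.
  by move=> w /=; rewrite eR connector_color_glue.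
rewrite enum_glue !filter_cat !map_cat; congr (_ ++ _ ++ _).
- rewrite keep // -!map_comp; apply: eq_map => a /=.
  apply: (part_color_refine_iter (eP := eA) (p1 := a1) (c := inr true) glueA_inj) => //.
  + by move=> u [[u'|u']|[]] //= _ _; exists u'.
  + exact: connector_color_glue.
- rewrite keep // -!map_comp; apply: eq_map => b /=.
  apply: (part_color_refine_iter (eP := eB) (p1 := b1) (c := inr true) glueB_inj) => //.
  + by move=> u [[u'|u']|[]] //= _ _; exists u'.
  + exact: connector_color_glue.
- rewrite /= (part_color_refine_iter (eP := fun _ _ => false) (f := fun _ => inr false)
                 (p1 := tt) (c := inr true) _ _ _ _ _ _ tt) //.
  + by congr [:: _]; apply: eq_refine_iter => -[]; rewrite /part_coloring pendant_default.
  + by move=> [] [].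
  + by move=> [] [[]|[]].
  + exact: connector_color_glue.
Qed.

End Glue.

Lemma perm_WL1 (V : finType) (e : rel V) (col1 col2 : V -> nat) :
  col1 =1 col2 -> perm_eq (map (refine_iter e col1 #|V|) (enum V)) (WL1 e col2).
Proof. by move=> h; rewrite (eq_map (eq_refine_iter e h _)) perm_sym perm_mset_of. Qed.

Definition other_part_WL1 (TA TB : finType) (eA : rel TA) (eB : rel TB) (a1 : TA) (b1 : TB)
  (c : TA + TB) : seq color :=
  if c is inl _ then WL1 eB (port_coloring b1) else WL1 eA (port_coloring a1).

Lemma perm_part_color_WL1_glue (TA TB : finType) (eA : rel TA) (eB : rel TB)
  (a1 : TA) (b1 : TB) (d : nat) (x : TA + TB) :
  (forall a, deg eA a = d) -> (forall b, deg eB b = d) -> #|TA| = #|TB| ->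
  perm_eq (map (part_color #|TA|)
            (filter (predC connector_color) (WL1 (glue_adj eA eB a1 b1) (indiv (inl x)))))
          (part_WL1 eA eB a1 b1 x ++ other_part_WL1 eA eB a1 b1 x ++ [:: pendant_color #|TA|]).
Proof.
move=> degA degB hcard.
have n_gt0 : 0 < #|TA|.
  by case: x => [a|b]; [|rewrite hcard]; apply/card_gt0P; [exists a | exists b].
rewrite /WL1 (permPl (perm_map _ (perm_filter _ (perm_mset_of _)))).
rewrite (part_color_glue a1 b1 degA degB) //; last by rewrite !card_sum card_bool; lia.
case: x {n_gt0} => [a|b] /=.
- apply: perm_cat; last apply: perm_cat => //.
  + exact: perm_WL1 (part_coloring_indiv_in _ _ (@glueA_inj _ _)).
  + by rewrite hcard; apply: perm_WL1 (part_coloring_indiv_out _ _).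
- rewrite perm_catCA; apply: perm_cat; last apply: perm_cat => //.
  + by rewrite hcard; apply: perm_WL1 (part_coloring_indiv_in _ _ (@glueB_inj _ _)).
  + exact: perm_WL1 (part_coloring_indiv_out _ _).
Qed.

Lemma deg_srg (T : finType) (e : rel T) n d lam mu :
  strongly_regular e n d lam mu -> forall v, deg e v = d.
Proof. by case=> _ hdeg _ _ v; rewrite -(hdeg v) card_set_count. Qed.

(* Neighbour classes of a vertex of class [k] (0: the port, 1: a neighbour of
   the port, 2: a non-neighbour of the port): a neighbour of the port is
   adjacent to the port, to [lam] other neighbours of the port and to
   [d - 1 - lam] non-neighbours. *)
Definition srg_nbr_classes (d lam mu k : nat) : seq nat :=
  if k == 0 then nseq d 1
  else if k == 1 then 0 :: nseq lam 1 ++ nseq (d - 1 - lam) 2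
  else nseq mu 1 ++ nseq (d - mu) 2.

Fixpoint srg_color (d lam mu r k : nat) : color :=
  match r with
  | 0 => GenTree.Leaf (if k == 0 then col_port else col_default)
  | r'.+1 => GenTree.Node 0 [:: srg_color d lam mu r' k;
      GenTree.Node 0 (mset_of (map (srg_color d lam mu r') (srg_nbr_classes d lam mu k)))]
  end.

Section StronglyRegular.

Variables (T : finType) (e : rel T) (n d lam mu : nat) (p : T).
Hypotheses (simple_e : simple_graph e) (srg_e : strongly_regular e n d lam mu).

Definition port_class (v : T) : nat := if v == p then 0 else if e p v then 1 else 2.

Lemma port_class_le2 (s : seq T) : all (leq^~ 2) (map port_class s).
Proof. by apply/allP => _ /mapP[v _ ->]; rewrite /port_class; case: ifP => //; case: ifP. Qed.

Lemma count_port_class0 (a : pred T) :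
  count_mem 0 (map port_class (filter a (enum T))) = a p.
Proof.
rewrite count_map count_filter -(count_enum_pred1I p a); apply: eq_count => w /=.
by rewrite /port_class; case: (w == p) => //; case: (e p w).
Qed.

Lemma count_port_class1 (a : pred T) :
  count_mem 1 (map port_class (filter a (enum T))) = count (predI (e p) a) (enum T).
Proof.
rewrite count_map count_filter; apply: eq_count => w /=; rewrite /port_class.
case: (w =P p) => [->|_]; last by case: (e p w).
by have [_ ->] := simple_e.
Qed.

Lemma nbr_classes_le2 k : all (leq^~ 2) (srg_nbr_classes d lam mu k).
Proof.
rewrite /srg_nbr_classes; case: ifP => _; [|case: ifP => _].
all: by rewrite /= ?all_cat ?all_nseq /= ?orbT.
Qed.

Lemma perm_srg_nbr_classes v :
  perm_eq (map port_class (filter (e v) (enum T))) (srg_nbr_classes d lam mu (port_class v)).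
Proof.
have [e_sym e_irr] := simple_e; have [_ hdeg hlam hmu] := srg_e.
set s := map port_class (filter (e v) (enum T)).
have s0 : count_mem 0 s = e v p by rewrite count_port_class0.
have s1 : count_mem 1 s = #|common_nbrs e v p|.
  by rewrite count_port_class1 card_set_count; apply: eq_count => w; rewrite /= andbC.
have s_size : size s = d by rewrite size_map size_filter -(hdeg v) card_set_count.
have s_le2 : all (leq^~ 2) s by apply: port_class_le2.
have := size_count_mem_le2 s_le2; rewrite s_size s0 s1 => hsize.
have [cls [-> e_vp common_vp]] : exists cls, [/\ port_class v = cls, e v p = (cls == 1) &
    #|common_nbrs e v p| = if cls == 0 then d else if cls == 1 then lam else mu].
  rewrite /port_class; case: (v =P p) => [->|/eqP vp]; last case epv: (e p v).
  - exists 0; rewrite e_irr -(hdeg p) !card_set_count; split => //.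
    by apply: eq_count => w; rewrite andbb.
  - by exists 1; rewrite e_sym epv hlam // e_sym.
  - by exists 2; rewrite e_sym epv hmu // e_sym epv.
rewrite e_vp common_vp in s0 s1 hsize; clear e_vp common_vp.
apply: perm_eq_le2; rewrite ?s_le2 ?nbr_classes_le2 ?s0 ?s1 ?s_size //.
all: move: hsize; clear s0 s1; rewrite /srg_nbr_classes.
all: case: cls => [|[|cls]] /=; rewrite ?count_cat ?count_nseq ?size_cat ?size_nseq /=; lia.
Qed.

Lemma refine_iter_port_srg r v :
  refine_iter e (port_coloring p) r v = srg_color d lam mu r (port_class v).
Proof.
elim: r v => [|r IH] v.
  by rewrite /refine_iter /= /port_coloring /port_class; case: (v == p) => //; case: (e p v).
rewrite refine_iterS /= IH; congr (GenTree.Node 0 [:: _; GenTree.Node 0 _]).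
apply/perm_mset_ofP; rewrite (eq_map IH) map_comp perm_map //.
exact: perm_srg_nbr_classes.
Qed.

Lemma perm_port_classes :
  perm_eq (map port_class (enum T)) (0 :: nseq d 1 ++ nseq (n - 1 - d) 2).
Proof.
have [_ e_irr] := simple_e; have [hn hdeg _ _] := srg_e.
have c0 : count_mem 0 (map port_class (enum T)) = 1.
  by have := count_port_class0 predT; rewrite filter_predT.
have c1 : count_mem 1 (map port_class (enum T)) = d.
  have := count_port_class1 predT; rewrite filter_predT => ->.
  by rewrite -(hdeg p) card_set_count; apply: eq_count => w; rewrite /= andbT.
have sz : size (map port_class (enum T)) = n by rewrite size_map -cardT hn.
have := size_count_mem_le2 (port_class_le2 (enum T)); rewrite c0 c1 sz => hsize.
apply: perm_eq_le2; rewrite ?port_class_le2 ?c0 ?c1 ?sz //=.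
- by rewrite all_cat !all_nseq /= !orbT.
- by rewrite count_cat !count_nseq.
- by rewrite count_cat !count_nseq /= mul1n mul0n addn0.
- by rewrite size_cat !size_nseq; lia.
Qed.

Lemma WL1_port_srg :
  WL1 e (port_coloring p)
  = mset_of (map (srg_color d lam mu n) (0 :: nseq d 1 ++ nseq (n - 1 - d) 2)).
Proof.
have [hn _ _ _] := srg_e.
apply/perm_mset_ofP; rewrite hn (eq_map (refine_iter_port_srg n)) map_comp perm_map //.
exact: perm_port_classes.
Qed.

End StronglyRegular.

Lemma WL1_port_srg_eq (TA TB : finType) (eA : rel TA) (eB : rel TB) n d lam mu
  (a1 : TA) (b1 : TB) :
  simple_graph eA -> simple_graph eB ->
  strongly_regular eA n d lam mu -> strongly_regular eB n d lam mu ->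
  WL1 eA (port_coloring a1) = WL1 eB (port_coloring b1).
Proof. by move=> sA sB hA hB; rewrite (WL1_port_srg a1 sA hA) (WL1_port_srg b1 sB hB). Qed.

Theorem claim1 (TA TB : finType) (eA : rel TA) (eB : rel TB)
  (n d lam mu : nat) (a1 : TA) (b1 : TB) :
  simple_graph eA -> simple_graph eB ->
  strongly_regular eA n d lam mu -> strongly_regular eB n d lam mu ->
  forall (c : TA + TB) (c' : TA + TA),
    part_WL1 eA eB a1 b1 c != part_WL1 eA eA a1 a1 c' ->
    WL1 (glue_adj eA eB a1 b1) (indiv (inl c))
      != WL1 (glue_adj eA eA a1 a1) (indiv (inl c')).
Proof.
move=> sA sB hA hB c c'; apply: contra_neq => eq_WL1.
have [[hnA _ _ _] [hnB _ _ _]] := (hA, hB).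
have hG := perm_part_color_WL1_glue a1 b1 c (deg_srg hA) (deg_srg hB) (etrans hnA (esym hnB)).
have hH := perm_part_color_WL1_glue a1 a1 c' (deg_srg hA) (deg_srg hA) erefl.
have other_eq : other_part_WL1 eA eB a1 b1 c = other_part_WL1 eA eA a1 a1 c'.
  by case: (c) => ?; case: (c') => ? //=; rewrite (WL1_port_srg_eq a1 b1 sA sB hA hB).
rewrite eq_WL1 other_eq in hG.
move: hH; rewrite (permPl hG) !catA !perm_cat2r.
by case: (c) => ?; case: (c') => ?; rewrite /= /WL1 => /perm_mset_of_eq.
Qed.
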